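(* Let $A$ be a real $m\times n$ matrix, $\mathbf b\in\mathbb R^m$, $\mathbf c\in\mathbb R^n$ (row vector), such that the linear program $\max\mathbf c\mathbf x$ s.t. $A\mathbf x\le\mathbf b$, $\mathbf x\ge0$ is bounded with unique optimal primal and dual solutions $\mathbf x^*$, $\mathbf y^*$. Then for every primal feasible $\mathbf x$, \[ \mathbf c(\mathbf x^*-\mathbf x)\ge\alpha_D(A,\mathbf b,\mathbf c)\,\|A_{V,:}(\mathbf x^*-\mathbf x)\|. \]
   Context: The dual is $\min\mathbf y\mathbf b$ s.t. $\mathbf yA\ge\mathbf c$, $\mathbf y\ge0$. $V=\{j:y^*_j>0\}$, $A_{V,:}$ is the submatrix of rows indexed by $V$, and $\alpha_D(A,\mathbf b,\mathbf c)=\min_{j\in V}y^*_j$. $\|\cdot\|$ is the Euclidean norm. *)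

From HB Require Import structures.
From mathcomp Require Import all_boot all_order all_algebra.
From mathcomp Require Import reals.
Set Implicit Arguments. Unset Strict Implicit. Unset Printing Implicit Defensive.
Import Order.TTheory GRing.Theory Num.Theory.
Local Open Scope ring_scope.

Section LP.
Variables (R : realType) (m n : nat).
Variables (A : 'M[R]_(m, n)) (b : 'cV[R]_m) (c : 'rV[R]_n).

Definition primal_feasible (x : 'cV[R]_n) : Prop :=
  (forall i, (A *m x) i 0 <= b i 0) /\ (forall j, 0 <= x j 0).

Definition primal_obj (x : 'cV[R]_n) : R := (c *m x) 0 0.

Definition dual_feasible (y : 'rV[R]_m) : Prop :=
  (forall j, c 0 j <= (y *m A) 0 j) /\ (forall i, 0 <= y 0 i).

Definition dual_obj (y : 'rV[R]_m) : R := (y *m b) 0 0.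

Definition primal_bounded : Prop :=
  exists M : R, forall x, primal_feasible x -> primal_obj x <= M.

Definition primal_optimal (x : 'cV[R]_n) : Prop :=
  primal_feasible x /\ forall x', primal_feasible x' -> primal_obj x' <= primal_obj x.

Definition dual_optimal (y : 'rV[R]_m) : Prop :=
  dual_feasible y /\ forall y', dual_feasible y' -> dual_obj y <= dual_obj y'.

Definition unique_primal_optimum (xs : 'cV[R]_n) : Prop :=
  primal_optimal xs /\ forall x, primal_optimal x -> x = xs.

Definition unique_dual_optimum (ys : 'rV[R]_m) : Prop :=
  dual_optimal ys /\ forall y, dual_optimal y -> y = ys.
End LP.

(* V = {j : y_j > 0};  alpha_D = min_{j in V} y_j  (set to 0 if V is empty,
   in which case ||A_{V,:} z|| = 0 and the value is irrelevant). *)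
Definition alphaD (R : realType) (m : nat) (y : 'rV[R]_m) : R :=
  match [pick j | 0 < y 0 j] with
  | Some j0 => \big[Num.min/y 0 j0]_(j | 0 < y 0 j) y 0 j
  | None => 0
  end.

Definition normAV (R : realType) (m n : nat) (A : 'M[R]_(m, n)) (y : 'rV[R]_m)
  (z : 'cV[R]_n) : R :=
  Num.sqrt (\sum_(j | 0 < y 0 j) ((A *m z) j 0) ^+ 2).

From HB Require Import structures.
From mathcomp Require Import all_boot all_order all_algebra.
From mathcomp Require Import reals ring lra.
Import Order.TTheory GRing.Theory Num.Theory.
Local Open Scope ring_scope.

(* Farkas' lemma, proved by Fourier-Motzkin elimination, gives the nontrivial
   half of LP duality and hence complementary slackness: every row i with
   y*_i > 0 is tight at x*.  For feasible x this yields
     c (x* - x) >= y* b - y* A x = sum_i y*_i (b - A x)_i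
               >= sum_(i in V) y*_i (A (x* - x))_i,
   a sum of nonnegative terms.  Bounding y*_i below by alpha_D, and the
   Euclidean norm of a nonnegative vector by its l1 norm, concludes. *)

Section FourierMotzkin.
Context {R : realFieldType}.

(* A pair [(a, beta)] stands for the linear inequality [a x <= beta]. *)
Definition sys_feasible {n} (s : seq ('rV[R]_n * R)) (x : 'cV[R]_n) : Prop :=
  forall p, p \in s -> (p.1 *m x) 0 0 <= p.2.

Inductive derivable {n} (s : seq ('rV[R]_n * R)) : 'rV[R]_n -> R -> Prop :=
  | derivable_mem p : p \in s -> derivable s p.1 p.2
  | derivable0 : derivable s 0 0
  | derivableD a beta a' beta' :
      derivable s a beta -> derivable s a' beta' -> derivable s (a + a') (beta + beta')
  | derivableZ t a beta : 0 <= t -> derivable s a beta -> derivable s (t *: a) (t * beta)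
  | derivable_weaken a beta beta' : derivable s a beta -> beta <= beta' -> derivable s a beta'.

Lemma exists_between (ls us : seq R) :
  (forall l u, l \in ls -> u \in us -> l <= u) ->
  exists x, (forall l, l \in ls -> l <= x) /\ (forall u, u \in us -> x <= u).
Proof.
elim: ls => [|l ls IH] lsus.
  exists (foldr Num.min 0 us); split=> // u.
  elim: us {lsus} => // v us IHus; rewrite in_cons /= ge_min.
  by case/orP=> [/eqP ->|/IHus ->]; rewrite ?lexx ?orbT.
have [|x [lsx xus]] := IH.
  by move=> l' u l'ls uus; apply: lsus; rewrite ?in_cons ?l'ls ?orbT.
exists (Num.max l x); split.
  by move=> l'; rewrite in_cons le_max => /orP[/eqP ->|/lsx ->]; rewrite ?lexx ?orbT.
by move=> u uus; rewrite ge_max xus // andbT lsus ?mem_head.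
Qed.

Lemma farkas0 (s : seq ('rV[R]_0 * R)) :
  ~ (exists x, sys_feasible s x) -> exists beta, beta < 0 /\ derivable s 0 beta.
Proof.
move=> infeas; have [/hasP[p ps p_neg]|/hasPn s_ge0] := boolP (has (fun p => p.2 < 0) s).
  by exists p.2; rewrite -(thinmx0 p.1); split=> //; apply: derivable_mem.
by case: infeas; exists 0 => p /s_ge0; rewrite mulmx0 mxE leNgt.
Qed.

Section Elimination.
Context {n : nat}.
Implicit Types (s : seq ('rV[R]_(1 + n) * R)) (p q : 'rV[R]_(1 + n) * R).

Definition lead p : R := lsubmx p.1 0 0.

Definition drop_lead p : 'rV[R]_n * R := (rsubmx p.1, p.2).

(* Cancels the first variable; a nonnegative combination when [lead p > 0 > lead q]. *)
Definition comb p q : 'rV[R]_(1 + n) * R :=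
  ((- lead q) *: p.1 + lead p *: q.1, - lead q * p.2 + lead p * q.2).

Definition fm_elim s : seq ('rV[R]_n * R) :=
  [seq drop_lead p | p <- s & lead p == 0] ++
  [seq drop_lead (comb p q) | p <- [seq p <- s | 0 < lead p],
                              q <- [seq q <- s | lead q < 0]].

Lemma mulmx_col_scalar (a : 'rV[R]_(1 + n)) x0 (x : 'cV[R]_n) :
  (a *m col_mx x0%:M x) 0 0 = lsubmx a 0 0 * x0 + (rsubmx a *m x) 0 0.
Proof. by rewrite -{1}(hsubmxK a) mul_row_col mxE mul_mx_scalar mxE mulrC. Qed.

Lemma lead_comb p q : lead (comb p q) = 0.
Proof. rewrite /lead !mxE /= /lead !mxE; ring. Qed.

Lemma row_mx0_rsubmx p : lead p = 0 -> row_mx 0 (rsubmx p.1) = p.1.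
Proof.
move=> p0; rewrite -[RHS]hsubmxK; congr row_mx.
by apply/matrixP=> i j; rewrite !ord1 mxE.
Qed.

Lemma derivable_fm_elim s a beta :
  derivable (fm_elim s) a beta -> derivable s (row_mx 0 a) beta.
Proof.
elim=> {a beta} [p||a beta a' beta' _ IH _ IH'|t a beta t0 _ IH|a beta beta' _ IH le_beta].
- rewrite mem_cat => /orP[/mapP[q]|/allpairsP[[q q'] [/=]]].
    rewrite mem_filter => /andP[/eqP q0 qs] -> /=.
    by rewrite row_mx0_rsubmx //; apply: derivable_mem.
  rewrite !mem_filter => /andP[q_gt0 qs] /andP[q'_lt0 q's] ->.
  rewrite row_mx0_rsubmx ?lead_comb //.
  by apply: derivableD; apply: derivableZ; rewrite ?oppr_ge0 ?ltW //; apply: derivable_mem.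
- by rewrite row_mx0; apply: derivable0.
- by rewrite -[0 : 'rV_1]addr0 -add_row_mx; exact: derivableD IH IH'.
- by rewrite -[0 : 'rV_1](scaler0 _ t) -scale_row_mx; exact: derivableZ t0 IH.
- exact: derivable_weaken IH le_beta.
Qed.

Definition bound (x : 'cV[R]_n) p : R := (p.2 - (rsubmx p.1 *m x) 0 0) / lead p.

Lemma sat_lead_gt0 p x0 x : 0 < lead p ->
  ((p.1 *m col_mx x0%:M x) 0 0 <= p.2) = (x0 <= bound x p).
Proof. by move=> p_gt0; rewrite mulmx_col_scalar ler_pdivlMr // lerBrDr mulrC. Qed.

Lemma sat_lead_lt0 p x0 x : lead p < 0 ->
  ((p.1 *m col_mx x0%:M x) 0 0 <= p.2) = (bound x p <= x0).
Proof. by move=> p_lt0; rewrite mulmx_col_scalar ler_ndivrMr // lerBrDr mulrC. Qed.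

Lemma bound_comb p q x : 0 < lead p -> lead q < 0 ->
  (rsubmx (comb p q).1 *m x) 0 0 <= (comb p q).2 -> bound x q <= bound x p.
Proof.
move=> p_gt0 q_lt0; rewrite linearD !linearZ /= mulmxDl -!scalemxAl !mxE /=.
have bound_p : bound x p * lead p = p.2 - (rsubmx p.1 *m x) 0 0 by rewrite divfK ?gt_eqF.
have bound_q : bound x q * lead q = q.2 - (rsubmx q.1 *m x) 0 0 by rewrite divfK ?lt_eqF.
move=> comb_sat; have lpq_gt0 : 0 < lead p * - lead q by rewrite mulr_gt0 ?oppr_gt0.
rewrite -subr_ge0 -(pmulr_rge0 _ lpq_gt0).
have -> : lead p * - lead q * (bound x p - bound x q) =
          - lead q * (bound x p * lead p) + lead p * (bound x q * lead q) by ring.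
rewrite bound_p bound_q !mxE; lra.
Qed.

Lemma fm_elim_feasible s x :
  sys_feasible (fm_elim s) x -> exists x0, sys_feasible s (col_mx x0%:M x).
Proof.
move=> feas.
have [|x0 [lo hi]] := exists_between [seq bound x q | q <- s & lead q < 0]
                                     [seq bound x p | p <- s & 0 < lead p].
  move=> _ _ /mapP[q qN ->] /mapP[p pP ->].
  have comb_sat := feas (drop_lead (comb p q)).
  move: pP qN; rewrite !mem_filter => /andP[p_gt0 ps] /andP[q_lt0 qs].
  apply: bound_comb => //; apply: comb_sat; rewrite mem_cat; apply/orP; right.
  by apply/allpairsP; exists (p, q); rewrite !mem_filter p_gt0 q_lt0 ps qs.
exists x0 => p ps; case: (ltgtP (lead p) 0) => [p_lt0|p_gt0|p0].
- by rewrite sat_lead_lt0 // lo // map_f // mem_filter p_lt0.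
- by rewrite sat_lead_gt0 // hi // map_f // mem_filter p_gt0.
- rewrite mulmx_col_scalar [lsubmx _ 0 0]p0 mul0r add0r.
  by apply: (feas (drop_lead p)); rewrite mem_cat map_f // mem_filter p0 eqxx.
Qed.

End Elimination.

Lemma farkas {n} (s : seq ('rV[R]_n * R)) :
  ~ (exists x, sys_feasible s x) -> exists beta, beta < 0 /\ derivable s 0 beta.
Proof.
elim: n s => [|n IH] s infeas; first exact: farkas0.
have [|beta [beta_lt0 der]] := IH (fm_elim s).
  by case=> x /fm_elim_feasible [x0 feas]; apply: infeas; exists (col_mx x0%:M x).
by exists beta; split=> //; move: der => /derivable_fm_elim; rewrite row_mx0.
Qed.

End FourierMotzkin.

Lemma mulmx_le_row {R : numDomainType} {n} {u v : 'rV[R]_n} {x : 'cV[R]_n} :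
  (forall j, u 0 j <= v 0 j) -> (forall j, 0 <= x j 0) -> (u *m x) 0 0 <= (v *m x) 0 0.
Proof. by move=> le_uv x_ge0; rewrite !mxE; apply: ler_sum => j _; apply: ler_wpM2r. Qed.

Lemma mulmx_le_col {R : numDomainType} {m} {y : 'rV[R]_m} {u v : 'cV[R]_m} :
  (forall i, 0 <= y 0 i) -> (forall i, u i 0 <= v i 0) -> (y *m u) 0 0 <= (y *m v) 0 0.
Proof. by move=> y_ge0 le_uv; rewrite !mxE; apply: ler_sum => i _; apply: ler_wpM2l. Qed.

Section Duality.
Context {R : realType} {m n : nat} {A : 'M[R]_(m, n)} {b : 'cV[R]_m} {c : 'rV[R]_n}.
Implicit Types (x : 'cV[R]_n) (y : 'rV[R]_m).

Definition lp_system (t : R) : seq ('rV[R]_n * R) :=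
  [seq (row i A, b i 0) | i <- enum 'I_m] ++
  [seq (- delta_mx 0 j, 0) | j <- enum 'I_n] ++ [:: (- c, - t)].

Lemma lp_system_feasible t x :
  sys_feasible (lp_system t) x -> primal_feasible A b x /\ t <= primal_obj c x.
Proof.
move=> feas; split; first split.
- move=> i; have := feas (row i A, b i 0).
  by rewrite mem_cat map_f ?mem_enum // -row_mul mxE; apply.
- move=> j; have := feas (- delta_mx 0 j, 0).
  by rewrite !mem_cat map_f ?mem_enum ?orbT // mulNmx -rowE !mxE oppr_le0; apply.
- have := feas (- c, - t).
  by rewrite !mem_cat mem_seq1 eqxx !orbT mulNmx mxE lerN2; apply.
Qed.

Lemma derivable_lp_system t a beta : derivable (lp_system t) a beta ->
  exists (y : 'rV[R]_m) (k : R), [/\ forall i, 0 <= y 0 i, 0 <= k,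
    forall j, a 0 j <= (y *m A - k *: c) 0 j & (y *m b) 0 0 - k * t <= beta].
Proof.
elim=> {a beta} [p||a beta a' beta' _ [y [k [y_ge0 k_ge0 le_a le_beta]]]
                    _ [y' [k' [y'_ge0 k'_ge0 le_a' le_beta']]]
                  |r a beta r_ge0 _ [y [k [y_ge0 k_ge0 le_a le_beta]]]
                  |a beta beta' _ [y [k [y_ge0 k_ge0 le_a le_beta]]] le_beta'].
- rewrite !mem_cat => /or3P[/mapP[i _ ->]|/mapP[j _ ->]|].
  + exists (delta_mx 0 i), 0; split=> [i'||j|].
    * by rewrite mxE; case: (_ && _).
    * by [].
    * by rewrite scale0r subr0 -rowE.
    * by rewrite mul0r subr0 -rowE mxE.
  + exists 0, 0; split=> [i'||j'|].
    * by rewrite mxE.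
    * by [].
    * by rewrite mul0mx scale0r subr0 !mxE oppr_le0; case: (_ && _).
    * by rewrite mul0mx mxE mul0r subr0.
  + rewrite mem_seq1 => /eqP ->; exists 0, 1; split=> [i'||j|].
    * by rewrite mxE.
    * by [].
    * by rewrite mul0mx scale1r sub0r.
    * by rewrite mul0mx mxE mul1r sub0r.
- exists 0, 0; split=> [i||j|].
  + by rewrite mxE.
  + by [].
  + by rewrite mul0mx scale0r subr0 !mxE.
  + by rewrite mul0mx mxE mul0r subr0.
- exists (y + y'), (k + k'); split=> [i||j|].
  + by rewrite mxE addr_ge0.
  + by rewrite addr_ge0.
  + by rewrite mulmxDl scalerDl opprD addrACA [(a + _) 0 j]mxE [X in _ <= X]mxE lerD.
  + move: le_beta le_beta'; rewrite mulmxDl [((y *m b) + _) 0 0]mxE; lra.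
- exists (r *: y), (r * k); split=> [i||j|].
  + by rewrite mxE mulr_ge0.
  + by rewrite mulr_ge0.
  + by rewrite -scalemxAl -scalerA -scalerBr [(r *: a) 0 j]mxE [X in _ <= X]mxE ler_wpM2l.
  + rewrite -scalemxAl mxE -mulrA -mulrBr; exact: ler_wpM2l.
- by exists y, k; split=> //; apply: le_trans le_beta'.
Qed.

Lemma primal_obj_le_dual_mul {y x} :
  dual_feasible A c y -> (forall j, 0 <= x j 0) -> primal_obj c x <= ((y *m A) *m x) 0 0.
Proof. by case=> c_le _; apply: mulmx_le_row. Qed.

Lemma dual_mul_le_obj {y x} :
  (forall i, 0 <= y 0 i) -> primal_feasible A b x -> ((y *m A) *m x) 0 0 <= dual_obj b y.
Proof. by move=> y_ge0 [Ax_le _]; rewrite -mulmxA; apply: mulmx_le_col. Qed.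

Lemma exists_dual_obj_lt t : (exists x0, primal_feasible A b x0) ->
  (forall x, primal_feasible A b x -> primal_obj c x < t) ->
  exists y, dual_feasible A c y /\ dual_obj b y < t.
Proof.
move=> [x0 x0_feas] obj_lt.
have infeas : ~ exists x, sys_feasible (lp_system t) x.
  by case=> x /lp_system_feasible [x_feas]; rewrite leNgt obj_lt.
have [beta [beta_lt0 /derivable_lp_system [y [k [y_ge0 k_ge0 le_0 le_beta]]]]] :=
  farkas _ infeas.
(* [k = 0] would certify that [A x <= b, x >= 0] itself is infeasible. *)
move: k_ge0; rewrite le_eqVlt eq_sym => /orP[/eqP k0|k_gt0].
  move: le_0 le_beta; rewrite k0 scale0r subr0 mul0r subr0 => yA_ge0 le_beta.
  have := le_trans (mulmx_le_row yA_ge0 x0_feas.2) (dual_mul_le_obj y_ge0 x0_feas).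
  by rewrite mul0mx mxE /dual_obj; lra.
exists (k^-1 *: y); split; first split.
- move=> j; rewrite -scalemxAl mxE ler_pdivlMl //.
  by move: (le_0 j); rewrite !mxE subr_ge0.
- by move=> i; rewrite mxE mulr_ge0 // invr_ge0 ltW.
- by rewrite /dual_obj -scalemxAl mxE ltr_pdivrMl //; lra.
Qed.

Lemma dual_slack_sum y x :
  \sum_i y 0 i * (b i 0 - (A *m x) i 0) = dual_obj b y - ((y *m A) *m x) 0 0.
Proof.
by rewrite /dual_obj -mulmxA !mxE -sumrB; apply: eq_bigr => i _; rewrite mulrBr.
Qed.

Lemma dual_opt_le_primal_opt {xs ys} :
  primal_optimal A b c xs -> dual_optimal A b c ys -> dual_obj b ys <= primal_obj c xs.
Proof.
move=> [xs_feas xs_max] [_ ys_min]; rewrite leNgt; apply/negP => lt_obj.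
have [|y [y_feas y_lt]] := exists_dual_obj_lt (dual_obj b ys) (ex_intro _ xs xs_feas).
  by move=> x x_feas; apply: le_lt_trans (xs_max x x_feas) lt_obj.
by have := ys_min y y_feas; rewrite leNgt y_lt.
Qed.

Lemma complementary_slackness {xs ys} :
  primal_optimal A b c xs -> dual_optimal A b c ys ->
  forall i, 0 < ys 0 i -> (A *m xs) i 0 = b i 0.
Proof.
move=> xs_opt ys_opt i ys_gt0.
have [[Axs_le xs_ge0] _] := xs_opt; have [ys_feas _] := ys_opt; have [_ ys_ge0] := ys_feas.
pose slack j := ys 0 j * (b j 0 - (A *m xs) j 0).
have slack_ge0 j : 0 <= slack j by rewrite mulr_ge0 ?subr_ge0.
have sum_slack0 : \sum_j slack j = 0.
  apply/eqP; rewrite eq_le sumr_ge0 // andbT dual_slack_sum subr_le0.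
  exact: le_trans (dual_opt_le_primal_opt xs_opt ys_opt) (primal_obj_le_dual_mul ys_feas xs_ge0).
move: (psumr_eq0P (fun j _ => slack_ge0 j) sum_slack0 (i := i) isT) => /eqP.
by rewrite mulf_eq0 gt_eqF //= subr_eq0 => /eqP.
Qed.

Lemma complementary_slacknessB {xs ys} x :
  primal_optimal A b c xs -> dual_optimal A b c ys ->
  forall i, 0 < ys 0 i -> (A *m (xs - x)) i 0 = b i 0 - (A *m x) i 0.
Proof.
move=> xs_opt ys_opt i ys_gt0.
by rewrite mulmxBr mxE [(- (A *m x)) i 0]mxE (complementary_slackness xs_opt ys_opt).
Qed.

Lemma weighted_slack_le_gap {xs ys x} :
  primal_optimal A b c xs -> dual_optimal A b c ys -> primal_feasible A b x ->
  \sum_(i | 0 < ys 0 i) ys 0 i * (A *m (xs - x)) i 0 <= primal_obj c (xs - x).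
Proof.
move=> xs_opt ys_opt x_feas; have [ys_feas _] := ys_opt.
have [[Ax_le x_ge0] [_ ys_ge0]] := (x_feas, ys_feas).
under eq_bigr => i ys_gt0 do rewrite (complementary_slacknessB x xs_opt ys_opt i ys_gt0).
apply: le_trans (_ : \sum_i ys 0 i * (b i 0 - (A *m x) i 0) <= _).
  rewrite [X in _ <= X](bigID (fun i => 0 < ys 0 i)) /= lerDl.
  by apply: sumr_ge0 => i _; rewrite mulr_ge0 ?subr_ge0.
have -> : primal_obj c (xs - x) = primal_obj c xs - primal_obj c x.
  by rewrite /primal_obj mulmxBr !mxE.
rewrite dual_slack_sum lerB //; first exact: dual_opt_le_primal_opt.
exact: primal_obj_le_dual_mul.
Qed.
End Duality.

Lemma sqrt_sum_sqr_le_sum (R : rcfType) (I : finType) (P : pred I) (w : I -> R) :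
  (forall i, P i -> 0 <= w i) -> Num.sqrt (\sum_(i | P i) w i ^+ 2) <= \sum_(i | P i) w i.
Proof.
move=> w_ge0; have sum_ge0 : 0 <= \sum_(i | P i) w i by apply: sumr_ge0.
rewrite -(ger0_norm sum_ge0) -sqrtr_sqr ler_sqrt ?sqr_ge0 // expr2 mulr_suml.
apply: ler_sum => i Pi; rewrite expr2 ler_wpM2l ?w_ge0 //.
by rewrite (bigD1 i) //= lerDl; apply: sumr_ge0 => j /andP[/w_ge0].
Qed.

Lemma alphaD_ge0 (R : realType) m (y : 'rV[R]_m) : 0 <= alphaD y.
Proof.
rewrite /alphaD; case: pickP => // j0 y_gt0.
by apply: le_bigmin => [|i /ltW //]; exact: ltW.
Qed.

Lemma alphaD_le (R : realType) m (y : 'rV[R]_m) i : 0 < y 0 i -> alphaD y <= y 0 i.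
Proof.
rewrite /alphaD; case: pickP => [j0 _|/(_ i) ->] //; exact: bigmin_le_cond.
Qed.

Lemma alphaD_normAV_le (R : realType) m n (A : 'M[R]_(m, n)) (y : 'rV[R]_m) (z : 'cV[R]_n) :
  (forall i, 0 < y 0 i -> 0 <= (A *m z) i 0) ->
  alphaD y * normAV A y z <= \sum_(i | 0 < y 0 i) y 0 i * (A *m z) i 0.
Proof.
move=> Az_ge0; rewrite /normAV.
apply: le_trans (_ : alphaD y * \sum_(i | 0 < y 0 i) (A *m z) i 0 <= _).
  by rewrite ler_wpM2l ?alphaD_ge0 ?sqrt_sum_sqr_le_sum.
by rewrite mulr_sumr; apply: ler_sum => i y_gt0; rewrite ler_wpM2r ?Az_ge0 ?alphaD_le.
Qed.

Theorem mainTheorem12 (R : realType) (m n : nat)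
  (A : 'M[R]_(m, n)) (b : 'cV[R]_m) (c : 'rV[R]_n)
  (xs : 'cV[R]_n) (ys : 'rV[R]_m) :
  primal_bounded A b c ->
  unique_primal_optimum A b c xs ->
  unique_dual_optimum A b c ys ->
  forall x : 'cV[R]_n, primal_feasible A b x ->
  primal_obj c (xs - x) >= alphaD ys * normAV A ys (xs - x).
Proof.
move=> _ [xs_opt _] [ys_opt _] x x_feas.
apply: le_trans (weighted_slack_le_gap xs_opt ys_opt x_feas).
apply: alphaD_normAV_le => i ys_gt0.
by rewrite (complementary_slacknessB x xs_opt ys_opt i ys_gt0) subr_ge0; apply: x_feas.1.
Qed.
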